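(* Let $(X_k)_{k\ge1}$ be a random walk on a finite vertex set $V$ (possibly non-Markovian and non-stationary) with $X_1\sim\pi$, and assume $C(\pi,V)<\infty$. Then $S\mapsto C(\pi,S)$ (with $C(\pi,\emptyset)=0$) is nondecreasing and submodular on $2^V$: $C(\pi,S)\le C(\pi,T)$ for $S\subseteq T$, and $C(\pi,S\cup\{v\})-C(\pi,S)\ge C(\pi,T\cup\{v\})-C(\pi,T)$ for all $S\subseteq T\subseteq V$ and $v\in V\setminus T$.
   Context: A random walk on $V$ is a discrete-time random process $X_1,X_2,\dots$ with values in $V$ whose law is given by arbitrary conditional distributions $\Pr(X_k=\cdot\mid X_1,\dots,X_{k-1})$. For nonempty $S\subseteq V$, $\phi(S)=\min\{k:\ \forall s\in S\ \exists j\le k \text{ with } X_j=s\}$, and the cover time is $C(\pi,S)=\mathbf{E}[\phi(S)]$ when $X_1\sim\pi$. *)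

From Stdlib Require Import Reals List Bool.
Import ListNotations.
Open Scope R_scope.

(* A finite vertex set is a type V with decidable equality and a duplicate-free
   complete enumeration [elems].  Subsets of V are boolean predicates V -> bool.

   The law of a (general, non-Markovian) random walk X_1, X_2, ... is given by
   the initial distribution [pi] (law of X_1) and, for every nonempty history
   h = [x_1; ...; x_{k-1}], the conditional distribution K h = Pr(X_k = . | h). *)

Definition eqbV {V : Type} (d : forall x y : V, {x = y} + {x <> y}) (x y : V) : bool :=
  if d x y then true else false.

Definition sumV {V : Type} (elems : list V) (f : V -> R) : R :=
  fold_right Rplus 0 (map f elems).

Definition step_law {V : Type} (pi : V -> R) (K : list V -> V -> R)
  (h : list V) (x : V) : R :=
  match h with nil => pi x | _ => K h x end.

Fixpoint path_prob_aux {V : Type} (pi : V -> R) (K : list V -> V -> R)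
  (hist rest : list V) : R :=
  match rest with
  | nil => 1
  | x :: r => step_law pi K hist x * path_prob_aux pi K (hist ++ [x]) r
  end.

Definition path_prob {V : Type} (pi : V -> R) (K : list V -> V -> R) (p : list V) : R :=
  path_prob_aux pi K nil p.

Fixpoint paths {V : Type} (elems : list V) (n : nat) : list (list V) :=
  match n with
  | O => [nil]
  | S m => flat_map (fun p => map (fun x => p ++ [x]) elems) (paths elems m)
  end.

Definition covers {V : Type} (d : forall x y : V, {x = y} + {x <> y})
  (elems : list V) (p : list V) (S : V -> bool) : bool :=
  forallb (fun v => negb (S v) || existsb (fun y => eqbV d y v) p) elems.

(* phi(S) = length p : the first |p| steps cover S but the first |p|-1 do not
   (phi(S) = 0 for S empty, matching the convention C(pi, emptyset) = 0) *)
Definition first_cover {V : Type} (d : forall x y : V, {x = y} + {x <> y})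
  (elems : list V) (p : list V) (S : V -> bool) : bool :=
  covers d elems p S &&
  match p with nil => true | _ => negb (covers d elems (removelast p) S) end.

Definition prob_phi_eq {V : Type} (d : forall x y : V, {x = y} + {x <> y})
  (elems : list V) (pi : V -> R) (K : list V -> V -> R) (S : V -> bool) (k : nat) : R :=
  fold_right Rplus 0
    (map (fun p => if first_cover d elems p S then path_prob pi K p else 0)
         (paths elems k)).

(* [cover_time_is ... S c] : C(pi, S) = E[phi(S)] is finite and equal to c, i.e.
   phi(S) < oo almost surely (sum_k Pr(phi(S) = k) = 1) and
   sum_k k Pr(phi(S) = k) = c. *)
Definition cover_time_is {V : Type} (d : forall x y : V, {x = y} + {x <> y})
  (elems : list V) (pi : V -> R) (K : list V -> V -> R) (S : V -> bool) (c : R) : Prop :=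
  infinite_sum (fun k => prob_phi_eq d elems pi K S k) 1 /\
  infinite_sum (fun k => INR k * prob_phi_eq d elems pi K S k) c.

Definition subsetV {V : Type} (S T : V -> bool) : Prop :=
  forall v, S v = true -> T v = true.

Definition addV {V : Type} (d : forall x y : V, {x = y} + {x <> y})
  (S : V -> bool) (v : V) : V -> bool :=
  fun x => S x || eqbV d x v.

From Stdlib Require Import Reals List Bool Lra Lia.
Import ListNotations.
Open Scope R_scope.

(* Let [g_S k] be the probability that the first [k] steps cover [S], so that
   [C(pi, S) = sum_k (1 - g_S k)].  Path by path, the indicator of not having
   covered [S] is nondecreasing in [S], and it is submodular: for [S <= T], a
   path that covers [T] and [S + v] also covers [T + v].  Taking expectations
   and summing over [k] transfers both properties to the cover time.
   Finiteness for every [S] follows from [g_V <= g_S]: the tail [k (1 - g_S k)]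
   is dominated by [k (1 - g_V k)], which tends to 0 because [E phi(V)] is
   finite. *)

Lemma Un_cv_const (c : R) : Un_cv (fun _ => c) c.
Proof.
  intros eps Heps. exists O. intros n _. unfold Rdist.
  rewrite Rminus_diag, Rabs_R0. exact Heps.
Qed.

Lemma Un_cv_squeeze (u v w : nat -> R) (l : R) :
  (forall n, u n <= v n <= w n) -> Un_cv u l -> Un_cv w l -> Un_cv v l.
Proof.
  intros Huvw Cu Cw eps Heps.
  destruct (Cu eps Heps) as [N1 H1]. destruct (Cw eps Heps) as [N2 H2].
  exists (N1 + N2)%nat. intros n Hn.
  specialize (H1 n ltac:(lia)). specialize (H2 n ltac:(lia)). specialize (Huvw n).
  unfold Rdist in *. apply Rabs_def2 in H1. apply Rabs_def2 in H2.
  apply Rabs_def1; lra.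
Qed.

Section Distribution_function.

Variable g : nat -> R.

Definition mass (k : nat) : R :=
  match k with O => g O | S k' => g k - g k' end.

Definition mean_upto (N : nat) : R := sum_f_R0 (fun k => INR k * mass k) N.

Definition tail_sum (N : nat) : R := sum_f_R0 (fun k => 1 - g k) N.

Lemma sum_mass N : sum_f_R0 mass N = g N.
Proof. induction N as [|N IH]; simpl; [reflexivity|]. rewrite IH. ring. Qed.

Lemma mean_upto_tail_sum N : mean_upto N = tail_sum N - INR (S N) * (1 - g N).
Proof.
  unfold mean_upto, tail_sum. induction N as [|N IH].
  - simpl. ring.
  - rewrite !tech5, IH, !S_INR. simpl mass. ring.
Qed.

Hypothesis g_le1 : forall k, g k <= 1.

Lemma tail_sum_growing : Un_growing tail_sum.
Proof. intros n. unfold tail_sum. rewrite tech5. specialize (g_le1 (S n)). lra. Qed.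

Hypothesis mass_ge0 : forall k, 0 <= mass k.

Lemma mean_upto_increment N m : (N <= m)%nat ->
  INR (S N) * (g m - g N) <= mean_upto m - mean_upto N.
Proof.
  induction 1 as [|m HNm IH]; [lra|].
  unfold mean_upto in *. rewrite tech5.
  assert (HSm : INR (S N) <= INR (S m)) by (apply le_INR; lia).
  specialize (mass_ge0 (S m)). simpl mass in *. nra.
Qed.

Variable c : R.
Hypothesis g_cv : Un_cv g 1.
Hypothesis mean_upto_cv : Un_cv mean_upto c.

(* Markov's inequality for the tail of the mean. *)
Lemma scaled_tail_le N : INR (S N) * (1 - g N) <= c - mean_upto N.
Proof.
  apply (Rle_cv_lim (Un := fun m => INR (S N) * (g (m + N)%nat - g N))
                    (Vn := fun m => mean_upto (m + N) - mean_upto N)).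
  - intros m. apply mean_upto_increment. lia.
  - apply (CV_mult (fun _ => INR (S N))); [apply Un_cv_const|].
    apply CV_minus; [apply CV_shift'; exact g_cv | apply Un_cv_const].
  - apply CV_minus; [apply CV_shift'; exact mean_upto_cv | apply Un_cv_const].
Qed.

Lemma scaled_tail_cv : Un_cv (fun N => INR (S N) * (1 - g N)) 0.
Proof.
  apply (Un_cv_squeeze (fun _ => 0) _ (fun N => c - mean_upto N)).
  - intros n. split; [|apply scaled_tail_le].
    apply Rmult_le_pos; [apply pos_INR | specialize (g_le1 n); lra].
  - apply Un_cv_const.
  - rewrite <- (Rminus_diag c). apply CV_minus; [apply Un_cv_const | exact mean_upto_cv].
Qed.

Lemma tail_sum_cv : Un_cv tail_sum c.
Proof.
  apply (Un_cv_ext (fun N => mean_upto N + INR (S N) * (1 - g N))).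
  - intros N. rewrite mean_upto_tail_sum. ring.
  - rewrite <- (Rplus_0_r c). apply CV_plus; [exact mean_upto_cv | exact scaled_tail_cv].
Qed.

End Distribution_function.

Lemma tail_sum_minus (g h : nat -> R) N :
  tail_sum g N - tail_sum h N = sum_f_R0 (fun k => h k - g k) N.
Proof.
  unfold tail_sum. rewrite <- minus_sum. apply sum_eq. intros k _. ring.
Qed.

Lemma mean_upto_cv_of_ge (g0 g : nat -> R) (c0 : R) :
  (forall k, 0 <= mass g0 k) -> Un_cv g0 1 -> Un_cv (mean_upto g0) c0 ->
  (forall k, g0 k <= g k <= 1) ->
  Un_cv g 1 /\ exists c, Un_cv (mean_upto g) c.
Proof.
  intros mass0_ge0 g0_cv mean0_cv Hg.
  assert (g_le1 : forall k, g k <= 1) by (intros k; apply Hg).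
  assert (g0_le1 : forall k, g0 k <= 1) by (intros k; specialize (Hg k); lra).
  assert (g_cv : Un_cv g 1) by exact (Un_cv_squeeze _ _ _ _ Hg g0_cv (Un_cv_const 1)).
  split; [exact g_cv|].
  assert (tail_le : forall n, tail_sum g n <= c0).
  { intros n. apply Rle_trans with (tail_sum g0 n).
    - apply sum_Rle. intros k _. specialize (Hg k). lra.
    - apply (growing_ineq (tail_sum g0)); [apply tail_sum_growing; exact g0_le1|].
      apply tail_sum_cv; assumption. }
  destruct (growing_cv (tail_sum g)) as [c Hc].
  - apply tail_sum_growing. exact g_le1.
  - exists c0. intros x [n ->]. apply tail_le.
  - exists c. apply (Un_cv_ext (fun N => tail_sum g N - INR (S N) * (1 - g N))).
    + intros N. symmetry. apply mean_upto_tail_sum.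
    + rewrite <- (Rminus_0_r c). apply CV_minus; [exact Hc|].
      apply (Un_cv_squeeze (fun _ => 0) _ (fun N => INR (S N) * (1 - g0 N))).
      * intros n. specialize (Hg n). pose proof (pos_INR (S n)). split; nra.
      * apply Un_cv_const.
      * apply scaled_tail_cv with c0; assumption.
Qed.

Lemma sumV_app {A : Type} (l1 l2 : list A) f : sumV (l1 ++ l2) f = sumV l1 f + sumV l2 f.
Proof. unfold sumV. induction l1 as [|a l1 IH]; simpl; [ring|]. rewrite IH. ring. Qed.

Lemma sumV_flat_map {A B : Type} (h : A -> list B) (l : list A) f :
  sumV (flat_map h l) f = sumV l (fun a => sumV (h a) f).
Proof.
  induction l as [|a l IH]; [reflexivity|]. cbn [flat_map]. rewrite sumV_app, IH. reflexivity.
Qed.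

Lemma sumV_map {A B : Type} (h : A -> B) (l : list A) f :
  sumV (map h l) f = sumV l (fun a => f (h a)).
Proof. unfold sumV. rewrite map_map. reflexivity. Qed.

Lemma sumV_ext {A : Type} (l : list A) f g : (forall x, f x = g x) -> sumV l f = sumV l g.
Proof. intros H. unfold sumV. f_equal. apply map_ext. exact H. Qed.

Lemma sumV_minus {A : Type} (l : list A) f g :
  sumV l (fun x => f x - g x) = sumV l f - sumV l g.
Proof. unfold sumV. induction l as [|a l IH]; simpl; [ring|]. rewrite IH. ring. Qed.

Lemma sumV_scal {A : Type} (l : list A) c f : sumV l (fun x => c * f x) = c * sumV l f.
Proof. unfold sumV. induction l as [|a l IH]; simpl; [ring|]. rewrite IH. ring. Qed.

Lemma sumV_nonneg {A : Type} (l : list A) f : (forall x, 0 <= f x) -> 0 <= sumV l f.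
Proof.
  intros H. unfold sumV. induction l as [|a l IH]; simpl; [lra|]. specialize (H a). lra.
Qed.

Lemma sumV_le {A : Type} (l : list A) f g : (forall x, f x <= g x) -> sumV l f <= sumV l g.
Proof.
  intros H. unfold sumV. induction l as [|a l IH]; simpl; [lra|]. specialize (H a). lra.
Qed.

Section Random_walk.

Variables (V : Type) (d : forall x y : V, {x = y} + {x <> y}) (elems : list V)
  (pi : V -> R) (K : list V -> V -> R).
Hypothesis pi_nonneg : forall x, 0 <= pi x.
Hypothesis pi_sum : sumV elems pi = 1.
Hypothesis K_nonneg : forall h x, 0 <= K h x.
Hypothesis K_sum : forall h, h <> nil -> sumV elems (K h) = 1.

Lemma step_law_nonneg h x : 0 <= step_law pi K h x.
Proof. destruct h; simpl; auto. Qed.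

Lemma step_law_sum h : sumV elems (step_law pi K h) = 1.
Proof. destruct h; [exact pi_sum | apply K_sum; discriminate]. Qed.

Lemma path_prob_aux_snoc hist p x :
  path_prob_aux pi K hist (p ++ [x]) =
  path_prob_aux pi K hist p * step_law pi K (hist ++ p) x.
Proof.
  revert hist. induction p as [|y p IH]; intros hist; simpl.
  - rewrite app_nil_r. ring.
  - rewrite IH, <- app_assoc. simpl. ring.
Qed.

Lemma path_prob_aux_nonneg hist p : 0 <= path_prob_aux pi K hist p.
Proof.
  revert hist. induction p as [|x p IH]; intros hist; simpl; [lra|].
  apply Rmult_le_pos; [apply step_law_nonneg | apply IH].
Qed.

Definition expect (k : nat) (f : list V -> R) : R :=
  sumV (paths elems k) (fun p => f p * path_prob pi K p).

Lemma expect_succ k f : expect (S k) f =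
  sumV (paths elems k)
    (fun q => path_prob pi K q * sumV elems (fun x => f (q ++ [x]) * step_law pi K q x)).
Proof.
  unfold expect. simpl paths. rewrite sumV_flat_map. apply sumV_ext. intros q.
  rewrite sumV_map, <- sumV_scal. apply sumV_ext. intros x.
  unfold path_prob. rewrite path_prob_aux_snoc. simpl (nil ++ q). ring.
Qed.

Lemma expect_succ_ext k f g : (forall q x, f (q ++ [x]) = g (q ++ [x])) ->
  expect (S k) f = expect (S k) g.
Proof.
  intros Hfg. rewrite !expect_succ. apply sumV_ext. intros q. f_equal.
  apply sumV_ext. intros x. rewrite Hfg. reflexivity.
Qed.

Lemma expect_removelast k f : expect (S k) (fun p => f (removelast p)) = expect k f.
Proof.
  rewrite expect_succ. unfold expect. apply sumV_ext. intros q.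
  rewrite (sumV_ext _ _ (fun x => f q * step_law pi K q x)).
  - rewrite sumV_scal, step_law_sum. ring.
  - intros x. rewrite removelast_last. reflexivity.
Qed.

Lemma expect_minus k f g : expect k (fun p => f p - g p) = expect k f - expect k g.
Proof. unfold expect. rewrite <- sumV_minus. apply sumV_ext. intros p. ring. Qed.

Lemma expect_le k f g : (forall p, f p <= g p) -> expect k f <= expect k g.
Proof.
  intros H. apply sumV_le. intros p.
  apply Rmult_le_compat_r; [apply path_prob_aux_nonneg | apply H].
Qed.

Lemma expect_const1 k : expect k (fun _ => 1) = 1.
Proof.
  induction k as [|k IH].
  - unfold expect, sumV, path_prob. simpl. ring.
  - rewrite (expect_removelast k (fun _ => 1)). exact IH.
Qed.

Lemma covers_app p r A : covers d elems p A = true -> covers d elems (p ++ r) A = true.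
Proof.
  unfold covers. rewrite !forallb_forall. intros H v Hv.
  specialize (H v Hv). rewrite existsb_app, !orb_true_iff in *. tauto.
Qed.

Lemma covers_sub_union p A B C :
  (forall u, C u = true -> A u = true \/ B u = true) ->
  covers d elems p A = true -> covers d elems p B = true -> covers d elems p C = true.
Proof.
  unfold covers. rewrite !forallb_forall. intros HC HA HB v Hv.
  specialize (HA v Hv). specialize (HB v Hv). destruct (C v) eqn:Cv; [|reflexivity].
  destruct (HC v Cv) as [E|E]; rewrite E in *; assumption.
Qed.

Definition cover_ind (A : V -> bool) (p : list V) : R :=
  if covers d elems p A then 1 else 0.

Lemma cover_ind_le1 A p : cover_ind A p <= 1.
Proof. unfold cover_ind. destruct covers; lra. Qed.

Lemma cover_ind_antitone A B p : subsetV A B -> cover_ind B p <= cover_ind A p.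
Proof.
  intros HAB. unfold cover_ind. destruct (covers d elems p B) eqn:EB.
  - rewrite (covers_sub_union p B B A (fun u Au => or_introl (HAB u Au)) EB EB). lra.
  - destruct (covers d elems p A); lra.
Qed.

Lemma cover_ind_submodular S T v p : subsetV S T ->
  cover_ind T p - cover_ind (addV d T v) p <= cover_ind S p - cover_ind (addV d S v) p.
Proof.
  intros HST. unfold cover_ind, addV.
  assert (T_S : covers d elems p T = true -> covers d elems p S = true).
  { intros HT. eapply covers_sub_union; [|exact HT|exact HT]. intros u Su. left. auto. }
  assert (Sv_S : covers d elems p (fun x => S x || eqbV d x v) = true ->
                 covers d elems p S = true).
  { intros HSv. eapply covers_sub_union; [|exact HSv|exact HSv].
    intros u Su. left. now rewrite Su. }
  assert (T_Sv_Tv : covers d elems p T = true ->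
                    covers d elems p (fun x => S x || eqbV d x v) = true ->
                    covers d elems p (fun x => T x || eqbV d x v) = true).
  { apply covers_sub_union. intros u Hu. apply orb_true_iff in Hu as [Tu|Eu].
    - left. now rewrite Tu.
    - right. rewrite Eu. apply orb_true_r. }
  destruct (covers d elems p S), (covers d elems p T),
    (covers d elems p (fun x => S x || eqbV d x v)),
    (covers d elems p (fun x => T x || eqbV d x v));
    try lra; exfalso; intuition congruence.
Qed.

Lemma first_cover_snoc_ind A q x :
  (if first_cover d elems (q ++ [x]) A then 1 else 0) = cover_ind A (q ++ [x]) - cover_ind A q.
Proof.
  assert (Hfirst : first_cover d elems (q ++ [x]) A =
                   covers d elems (q ++ [x]) A && negb (covers d elems q A)).
  { unfold first_cover. destruct (q ++ [x]) as [|y r] eqn:Eqx.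
    - destruct q; discriminate.
    - rewrite <- Eqx, removelast_last. reflexivity. }
  rewrite Hfirst. unfold cover_ind. destruct (covers d elems q A) eqn:Eq.
  - rewrite (covers_app q [x] A Eq). simpl. ring.
  - destruct (covers d elems (q ++ [x]) A); simpl; ring.
Qed.

Definition cover_cdf (A : V -> bool) (k : nat) : R := expect k (cover_ind A).

Lemma prob_phi_eq_mass A k : prob_phi_eq d elems pi K A k = mass (cover_cdf A) k.
Proof.
  destruct k as [|k].
  - unfold prob_phi_eq, mass, cover_cdf, expect, cover_ind, first_cover, sumV, path_prob.
    simpl. destruct covers; simpl; ring.
  - simpl mass. unfold cover_cdf.
    rewrite <- (expect_removelast k (cover_ind A)), <- expect_minus.
    transitivity (expect (S k) (fun p => if first_cover d elems p A then 1 else 0)).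
    + unfold prob_phi_eq, expect. fold (sumV (paths elems (S k))
        (fun p => if first_cover d elems p A then path_prob pi K p else 0)).
      apply sumV_ext. intros p. destruct first_cover; ring.
    + apply expect_succ_ext. intros q x. rewrite removelast_last.
      apply first_cover_snoc_ind.
Qed.

Lemma cover_cdf_le1 A k : cover_cdf A k <= 1.
Proof. rewrite <- (expect_const1 k). apply expect_le, cover_ind_le1. Qed.

Lemma mass_cover_cdf_ge0 A k : 0 <= mass (cover_cdf A) k.
Proof.
  rewrite <- prob_phi_eq_mass. apply sumV_nonneg. intros p.
  destruct first_cover; [apply path_prob_aux_nonneg | lra].
Qed.

Lemma cover_cdf_antitone A B k : subsetV A B -> cover_cdf B k <= cover_cdf A k.
Proof. intros HAB. apply expect_le. intros p. apply cover_ind_antitone, HAB. Qed.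

Lemma cover_cdf_submodular S T v k : subsetV S T ->
  cover_cdf T k - cover_cdf (addV d T v) k <= cover_cdf S k - cover_cdf (addV d S v) k.
Proof.
  intros HST. unfold cover_cdf. rewrite <- !expect_minus.
  apply expect_le. intros p. apply cover_ind_submodular, HST.
Qed.

Lemma cover_time_is_iff A c : cover_time_is d elems pi K A c <->
  Un_cv (cover_cdf A) 1 /\ Un_cv (mean_upto (cover_cdf A)) c.
Proof.
  assert (Hcdf : forall n, sum_f_R0 (prob_phi_eq d elems pi K A) n = cover_cdf A n).
  { intros n. rewrite <- (sum_mass (cover_cdf A)).
    apply sum_eq. intros k _. apply prob_phi_eq_mass. }
  assert (Hmean : forall n, sum_f_R0 (fun k => INR k * prob_phi_eq d elems pi K A k) n =
                            mean_upto (cover_cdf A) n).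
  { intros n. apply sum_eq. intros k _. rewrite prob_phi_eq_mass. reflexivity. }
  unfold cover_time_is, infinite_sum.
  fold (Un_cv (sum_f_R0 (prob_phi_eq d elems pi K A)) 1).
  fold (Un_cv (sum_f_R0 (fun k => INR k * prob_phi_eq d elems pi K A k)) c).
  split; intros [H1 H2]; split.
  - exact (Un_cv_ext _ _ Hcdf _ H1).
  - exact (Un_cv_ext _ _ Hmean _ H2).
  - exact (Un_cv_ext _ _ (fun n => eq_sym (Hcdf n)) _ H1).
  - exact (Un_cv_ext _ _ (fun n => eq_sym (Hmean n)) _ H2).
Qed.

Lemma cover_time_tail_sum A c :
  cover_time_is d elems pi K A c -> Un_cv (tail_sum (cover_cdf A)) c.
Proof.
  intros [cdf_cv mean_cv]%cover_time_is_iff.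
  apply tail_sum_cv; auto using cover_cdf_le1, mass_cover_cdf_ge0.
Qed.

Lemma cover_time_exists : (exists cV, cover_time_is d elems pi K (fun _ => true) cV) ->
  forall A, exists c, cover_time_is d elems pi K A c.
Proof.
  intros [cV [cdfV_cv meanV_cv]%cover_time_is_iff] A.
  destruct (mean_upto_cv_of_ge (cover_cdf (fun _ => true)) (cover_cdf A) cV)
    as [cdf_cv [c mean_cv]]; auto using cover_cdf_le1, mass_cover_cdf_ge0.
  - intros k. split; [|apply cover_cdf_le1]. apply cover_cdf_antitone. intros u _. reflexivity.
  - exists c. apply cover_time_is_iff. split; assumption.
Qed.

Lemma cover_time_monotone S T cS cT : subsetV S T ->
  cover_time_is d elems pi K S cS -> cover_time_is d elems pi K T cT -> cS <= cT.
Proof.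
  intros HST HS HT.
  refine (Rle_cv_lim _ (cover_time_tail_sum S cS HS) (cover_time_tail_sum T cT HT)).
  intros n. apply sum_Rle. intros k _. pose proof (cover_cdf_antitone S T k HST). lra.
Qed.

Lemma cover_time_submodular S T v cS cT cSv cTv : subsetV S T ->
  cover_time_is d elems pi K S cS -> cover_time_is d elems pi K T cT ->
  cover_time_is d elems pi K (addV d S v) cSv ->
  cover_time_is d elems pi K (addV d T v) cTv ->
  cTv - cT <= cSv - cS.
Proof.
  intros HST HS HT HSv HTv.
  refine (Rle_cv_lim _
    (CV_minus _ _ _ _ (cover_time_tail_sum _ _ HTv) (cover_time_tail_sum _ _ HT))
    (CV_minus _ _ _ _ (cover_time_tail_sum _ _ HSv) (cover_time_tail_sum _ _ HS))).
  intros n. rewrite !tail_sum_minus. apply sum_Rle. intros k _.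
  apply cover_cdf_submodular, HST.
Qed.

End Random_walk.

Theorem proposition7 (V : Type) (d : forall x y : V, {x = y} + {x <> y})
  (elems : list V) (Hnodup : NoDup elems) (Hcomplete : forall v : V, In v elems)
  (pi : V -> R) (K : list V -> V -> R)
  (Hpi_nonneg : forall x, 0 <= pi x) (Hpi_sum : sumV elems pi = 1)
  (HK_nonneg : forall h x, 0 <= K h x) (HK_sum : forall h, h <> nil -> sumV elems (K h) = 1)
  (Hfin : exists cV, cover_time_is d elems pi K (fun _ => true) cV) :
  (forall S : V -> bool, exists c, cover_time_is d elems pi K S c)
  /\ (forall (S T : V -> bool) (cS cT : R), subsetV S T ->
        cover_time_is d elems pi K S cS -> cover_time_is d elems pi K T cT -> cS <= cT)
  /\ (forall (S T : V -> bool) (v : V) (cS cT cSv cTv : R),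
        subsetV S T -> T v = false ->
        cover_time_is d elems pi K S cS -> cover_time_is d elems pi K T cT ->
        cover_time_is d elems pi K (addV d S v) cSv ->
        cover_time_is d elems pi K (addV d T v) cTv ->
        cSv - cS >= cTv - cT).
Proof.
  (* None of [T v = false], [Hnodup] and [Hcomplete] is needed. *)
  split; [|split].
  - exact (cover_time_exists V d elems pi K Hpi_nonneg Hpi_sum HK_nonneg HK_sum Hfin).
  - exact (cover_time_monotone V d elems pi K Hpi_nonneg Hpi_sum HK_nonneg HK_sum).
  - intros S T v cS cT cSv cTv HST _ HS HT HSv HTv. apply Rle_ge.
    exact (cover_time_submodular V d elems pi K Hpi_nonneg Hpi_sum HK_nonneg HK_sum
             S T v cS cT cSv cTv HST HS HT HSv HTv).
Qed.
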